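(* Let $(K,\mathrm{val})$ be a $2$-henselian valued field whose residue class field $F$ has characteristic $\neq2$, let $A$ be a subring with $B\subseteq A\subseteq K$, $H=\mathrm{val}(A^\times)$, and let $\mathcal M,\mathcal N$ be quasi-quadratic modules in $A$. Write $M_g=M_g^A(\mathcal M)$, $N_g=M_g^A(\mathcal N)$. Then for every $g\in H\cup G_{\ge e}$: (1) $M_g^A(\mathcal M\cap\mathcal N)=M_g\cap N_g$; (2) $M_g^A(\mathcal M+\mathcal N)=F$ if there exists $h\in H\cup G_{\ge e}$ with $g\ge h$ and $M_h+N_h=F$, and $M_g^A(\mathcal M+\mathcal N)=M_g+N_g$ otherwise.
   Context: Let $(G,\le)$ be a totally ordered abelian group written multiplicatively with identity $e$; $G_{\ge e}=\{g\in G:g\ge e\}$, $G^2=\{g^2:g\in G\}$. Let $(K,\mathrm{val})$ be a valued field with surjective valuation $\mathrm{val}:K\to G\cup\{\infty\}$, valuation ring $B=\{x:\mathrm{val}(x)\ge e\}$, residue map $\pi:B\to F$, residue field $F$. A strict unit is $x\in B^\times$ with $\pi(x)=1$; when $\mathrm{char}F\ne2$, $2$-henselian is equivalent to every strict unit being a square in $K$. For a subring $A$ with $B\subseteq A\subseteq K$ put $H=\mathrm{val}(A^\times)$. For $g\in G$, $\overline g$ is its class in $G/G^2$. A quasi-quadratic module in a commutative ring $R$ is a subset $M\subseteq R$ with $M+M\subseteq M$ and $a^2M\subseteq M$ for all $a\in R$. A pseudo-angular component map is a map $\mathrm{p.an}:K^\times\to F^\times$ such that: (1) $\mathrm{p.an}(u)=\pi(u)$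 for $u\in B^\times$; (2) $\mathrm{p.an}(ux)=\pi(u)\mathrm{p.an}(x)$ for $u\in B^\times,x\in K^\times$; (3) for all $g\in G$, $c\in F^\times$ there is $w\in K$ with $\mathrm{val}(w)=g$, $\mathrm{p.an}(w)=c$; (4) for nonzero $x_1,x_2$ with $x_1+x_2\ne0$: if $\mathrm{val}(x_1)<\mathrm{val}(x_2)$ then $\mathrm{p.an}(x_1+x_2)=\mathrm{p.an}(x_1)$; if $\mathrm{val}(x_1)=\mathrm{val}(x_2)$ and $\mathrm{p.an}(x_1)+\mathrm{p.an}(x_2)\ne0$ then $\mathrm{val}(x_1+x_2)=\mathrm{val}(x_1)$ and $\mathrm{p.an}(x_1+x_2)=\mathrm{p.an}(x_1)+\mathrm{p.an}(x_2)$; (5) if $x,y\in K^\times$, $\overline{\mathrm{val}(x)}=\overline{\mathrm{val}(y)}$ and $\mathrm{p.an}(x)=\mathrm{p.an}(y)$ then $y=u^2x$ for some $u\in K^\times$; (6) for $a,u\in K^\times$ there is $k\in F^\times$ with $\mathrm{p.an}(au^2)=\mathrm{p.an}(a)k^2$. Such a map exists under the hypotheses; fix one. For a quasi-quadratic module $\mathcal M$ in $A$ and $g\in G$: $M_g^A(\mathcal M)=\{\mathrm{p.an}(x):x\in\mathcal M\setminus\{0\},\ \mathrm{val}(x)=g\}\cup\{0\}$. *)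

(* The value group G (written multiplicatively in the paper)
   is written ADDITIVELY here: identity e = 0, product = +, g^2 = g + g. *)
From HB Require Import structures.
From mathcomp Require Import all_boot all_order all_algebra.
Set Implicit Arguments. Unset Strict Implicit. Unset Printing Implicit Defensive.
Import GRing.Theory.
Local Open Scope ring_scope.

Section Defs.

Variable G : zmodType.
Variable le : G -> G -> Prop.

Definition is_ordered_group : Prop :=
  [/\ (forall g, le g g),
      (forall g h, le g h -> le h g -> g = h),
      (forall g h k, le g h -> le h k -> le g k),
      (forall g h, le g h \/ le h g) &
      (forall g h k, le g h -> le (g + k) (h + k))].

Definition lt (g h : G) : Prop := le g h /\ g <> h.

(* order on G u {oo}, with None = oo the top element *)
Definition ole (a b : option G) : Prop :=
  match a, b with
  | _, None => True
  | None, Some _ => False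
  | Some g, Some h => le g h
  end.
Definition olt (a b : option G) : Prop := ole a b /\ a <> b.

Definition oadd (a b : option G) : option G :=
  match a, b with Some g, Some h => Some (g + h) | _, _ => None end.

Definition sqclass_eq (g h : G) : Prop := exists k, g - h = k + k.

Variable K : fieldType.
Variable val : K -> option G.

Definition is_valuation : Prop :=
  [/\ (forall x, val x = None <-> x = 0),
      (forall x y, val (x * y) = oadd (val x) (val y)),
      (forall x y g, ole (Some g) (val x) -> ole (Some g) (val y) ->
         ole (Some g) (val (x + y))) &   (* val(x+y) >= min(val x, val y) *)
      (forall g, exists x, val x = Some g)].

Definition inB (x : K) : Prop := ole (Some 0) (val x).
Definition unitB (x : K) : Prop := [/\ inB x, x != 0 & inB x^-1].

(* residue map pi : B -> F onto the residue field F (given as a total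
   function on K; only its values on B matter) *)
Variable F : fieldType.
Variable pi : K -> F.

Definition is_residue_map : Prop :=
  [/\ pi 1 = 1,
      (forall x y, inB x -> inB y -> pi (x + y) = pi x + pi y),
      (forall x y, inB x -> inB y -> pi (x * y) = pi x * pi y),
      (forall x, inB x -> (pi x = 0 <-> olt (Some 0) (val x))) &
      (forall c, exists x, inB x /\ pi x = c)].

Definition strict_unit (x : K) : Prop := unitB x /\ pi x = 1.

(* 2-henselian, in the form valid when char F <> 2 (see context):
   every strict unit is a square in K *)
Definition two_henselian : Prop :=
  forall x, strict_unit x -> exists y, x = y ^+ 2.

Variable pan : K -> F.

Definition is_pseudo_angular : Prop :=
  (forall x, x != 0 -> pan x != 0) /\ [/\
      (forall u, unitB u -> pan u = pi u),                                (* (1) *)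
      (forall u x, unitB u -> x != 0 -> pan (u * x) = pi u * pan x),      (* (2) *)
      (forall g c, c != 0 -> exists w, val w = Some g /\ pan w = c),      (* (3) *)
      (forall x1 x2, x1 != 0 -> x2 != 0 -> x1 + x2 != 0 ->                (* (4) *)
         (olt (val x1) (val x2) -> pan (x1 + x2) = pan x1) /\
         (val x1 = val x2 -> pan x1 + pan x2 != 0 ->
            val (x1 + x2) = val x1 /\ pan (x1 + x2) = pan x1 + pan x2)) &
      (forall x y g h, x != 0 -> y != 0 -> val x = Some g -> val y = Some h -> (* (5) *)
         sqclass_eq g h -> pan x = pan y -> exists u, u != 0 /\ y = u ^+ 2 * x)] /\
      (forall a u, a != 0 -> u != 0 ->                                    (* (6) *)
         exists k, k != 0 /\ pan (a * u ^+ 2) = pan a * k ^+ 2).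

Variable A : K -> Prop.

Definition is_overring : Prop :=
  A 0 /\ [/\ A 1,
      (forall x y, A x -> A y -> A (x + y)),
      (forall x, A x -> A (- x)),
      (forall x y, A x -> A y -> A (x * y)) &
      (forall x, inB x -> A x)].

Definition inH (g : G) : Prop :=
  exists a, [/\ A a, a != 0, A a^-1 & val a = Some g].

(* quasi-quadratic module in A (taken nonempty) *)
Definition quasi_quadratic (M : K -> Prop) : Prop :=
  [/\ (forall x, M x -> A x),
      (exists x, M x),
      (forall x y, M x -> M y -> M (x + y)) &
      (forall a x, A a -> M x -> M (a ^+ 2 * x))].

Definition Mg (M : K -> Prop) (g : G) (c : F) : Prop :=
  (exists x, [/\ M x, x != 0, val x = Some g & pan x = c]) \/ c = 0.

End Defs.

Definition setI_p (T : Type) (P Q : T -> Prop) : T -> Prop := fun x => P x /\ Q x.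
Definition setSum_p (T : zmodType) (P Q : T -> Prop) : T -> Prop :=
  fun z => exists x y, [/\ P x, Q y & z = x + y].
Definition seteq_p (T : Type) (P Q : T -> Prop) : Prop := forall x, P x <-> Q x.
Definition setfull_p (T : Type) (P : T -> Prop) : Prop := forall x, P x.

From mathcomp Require Import all_boot all_order all_algebra.
From mathcomp Require Import ring.
Import GRing.Theory.
Local Open Scope ring_scope.
Set Implicit Arguments. Unset Strict Implicit.

(* The proof only uses the axioms of the pseudo-angular component map (which
   encode 2-henselianity): (5) says that two elements of the same value and the
   same angular component differ by the square of a unit of B, and (4) computes
   the value and angular component of a sum.  Hence:
   - (1) an element of M and an element of N with equal value and component
     are unit-square multiples of each other, so both lie in M and in N;
   - (2) if M_h + N_h = F then every element of value h lies in M + N, and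
     every element of value g > h is a sum of two elements of value h;
   - (3) a component of an element x + y of M + N is either a component of x
     or y, or a sum of both; the only other possibility is cancellation
     pan x + pan y = 0 at a common value h <= g, and then (char F <> 2)
     M_h + N_h = F, which is excluded. *)

Section ValueGroupTheory.

Variable G : zmodType.
Variable le : G -> G -> Prop.
Hypothesis hG : is_ordered_group le.

Lemma le_refl g : le g g. Proof. by case: hG. Qed.
Lemma le_anti g h : le g h -> le h g -> g = h. Proof. by case: hG => _ H _ _ _; apply: H. Qed.
Lemma le_total g h : le g h \/ le h g. Proof. by case: hG. Qed.
Lemma le_addr g h k : le g h -> le (g + k) (h + k). Proof. by case: hG => _ _ _ _; apply. Qed.

Lemma double_eq0 (g : G) : g + g = 0 -> g = 0.
Proof.
move=> gg0; have [g_ge0|g_le0] := le_total 0 g.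
- by have := le_addr g g_ge0; rewrite add0r gg0 => /le_anti; apply.
- by have := le_addr g g_le0; rewrite add0r gg0 => /(le_anti g_le0).
Qed.

Section Valuation.

Variable K : fieldType.
Variable val : K -> option G.
Hypothesis hval : is_valuation le val.

Lemma val_eq_None x : val x = None <-> x = 0. Proof. by case: hval. Qed.
Lemma valM x y : val (x * y) = oadd (val x) (val y). Proof. by case: hval. Qed.
Lemma val_addr_ge x y g : ole le (Some g) (val x) -> ole le (Some g) (val y) ->
  ole le (Some g) (val (x + y)).
Proof. by case: hval => _ _ H _; apply: H. Qed.
Lemma val_surj g : exists x, val x = Some g. Proof. by case: hval. Qed.

Lemma val_neq0 x : x != 0 -> exists a, val x = Some a.
Proof.
move=> /eqP x_neq0; case vx: (val x) => [a|]; first by exists a.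
by move/val_eq_None: vx.
Qed.

Lemma neq0_of_val x a : val x = Some a -> x != 0.
Proof. by move=> vx; apply/eqP => x0; move: vx; rewrite x0 (proj2 (val_eq_None 0)). Qed.

Lemma val1 : val 1 = Some 0.
Proof.
have [a va] := val_neq0 (oner_neq0 K).
have := valM 1 1; rewrite mulr1 va /= => -[aa].
by congr Some; apply: (@addrI _ a); rewrite addr0 -aa.
Qed.

Lemma valN x : val (- x) = val x.
Proof.
have valN1 : val (-1) = Some 0.
  have [a va] : exists a, val (-1) = Some a.
    by apply: val_neq0; rewrite oppr_eq0 oner_neq0.
  have := valM (-1) (-1); rewrite mulrNN mulr1 val1 va /= => -[aa].
  by congr Some; apply: double_eq0; rewrite -aa.
by rewrite -mulN1r valM valN1; case: (val x) => //= b; rewrite add0r.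
Qed.

Lemma valV x a : val x = Some a -> val x^-1 = Some (- a).
Proof.
move=> vx; have := valM x x^-1; rewrite mulfV ?(neq0_of_val vx) // val1 vx.
case: (val x^-1) => [b|] //= [ab].
by congr Some; apply: (@addrI _ a); rewrite -ab subrr.
Qed.

Lemma val_add_dominant x y a b : val x = Some a -> val y = Some b -> le a b -> a <> b ->
  val (x + y) = Some a.
Proof.
move=> vx vy le_ab neq_ab.
have xE : x = (x + y) + (- y) by rewrite addrK.
case vxy: (val (x + y)) => [c|]; last first.
  move/val_eq_None/eqP: vxy; rewrite addr_eq0 => /eqP xNy.
  by move: vx; rewrite xNy valN vy => -[ba]; case: neq_ab.
have le_ac : le a c.
  by have := @val_addr_ge x y a; rewrite vx vy vxy; apply; [exact: le_refl|].
congr Some; apply: le_anti _ le_ac.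
have [le_cb|le_bc] := le_total c b.
- have := @val_addr_ge (x + y) (- y) c; rewrite -xE vx vxy valN vy; apply=> //.
  exact: le_refl.
- have := @val_addr_ge (x + y) (- y) b; rewrite -xE vx vxy valN vy /=.
  by move=> /(_ le_bc (le_refl b)) le_ba; case: neq_ab; apply: le_anti.
Qed.

Section ResidueAndAngularComponent.

Variable F : fieldType.
Variables pi pan : K -> F.
Hypothesis hpi : is_residue_map le val pi.
Hypothesis hpan : is_pseudo_angular le val pi pan.

Lemma inB_val0 u : val u = Some 0 -> inB le val u.
Proof. by rewrite /inB => ->; apply: le_refl. Qed.

Lemma unitB_val0 u : val u = Some 0 -> unitB le val u.
Proof.
move=> vu; split; first exact: inB_val0.
- exact: neq0_of_val vu.
- by apply: inB_val0; rewrite (valV vu) oppr0.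
Qed.

Lemma pi0 : pi 0 = 0.
Proof.
have B0 : inB le val 0 by rewrite /inB (proj2 (val_eq_None 0)).
case: hpi => _ piD _ _ _; have := piD _ _ B0 B0; rewrite addr0 => pi00.
by apply: (@addrI _ (pi 0)); rewrite addr0 -pi00.
Qed.

Lemma residue_lift k : k != 0 -> exists t, val t = Some 0 /\ pi t = k.
Proof.
move=> k_neq0; case: hpi => _ _ _ pi_eq0 pi_surj.
have [t [Bt pt]] := pi_surj k; exists t; split => //.
move: (Bt) k_neq0; rewrite -pt /inB; case vt: (val t) => [a|] /= le0a; last first.
  by move/val_eq_None: vt => ->; rewrite pi0 eqxx.
have [->|a_neq0] := eqVneq a 0 => // /eqP[]; apply/(pi_eq0 t Bt).
by rewrite vt; split => // -[/esym/eqP]; rewrite (negbTE a_neq0).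
Qed.

Lemma val_unit_sqM t x : val t = Some 0 -> val (t ^+ 2 * x) = val x.
Proof.
move=> vt; rewrite valM expr2 valM vt /= addr0.
by case: (val x) => //= b; rewrite add0r.
Qed.

Lemma pan_neq0 x : x != 0 -> pan x != 0. Proof. by case: hpan => H _; apply: H. Qed.

Lemma pan_unit_sqM t x : val t = Some 0 -> x != 0 -> pan (t ^+ 2 * x) = pi t ^+ 2 * pan x.
Proof.
move=> vt x_neq0; case: hpan => _ [[_ panM _ _ _] _]; case: hpi => _ _ piM _ _.
have vt2 : val (t ^+ 2) = Some 0 by rewrite -[t ^+ 2]mulr1 val_unit_sqM ?val1.
rewrite (panM _ _ (unitB_val0 vt2) x_neq0) !expr2.
congr (_ * _); apply: piM; exact: inB_val0.
Qed.

Lemma panN x : x != 0 -> pan (- x) = - pan x.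
Proof.
move=> x_neq0; case: hpan => _ [[_ panM _ _ _] _]; case: hpi => pi1 piD _ _ _.
have vN1 : val (-1) = Some 0 by rewrite valN val1.
have piN1 : pi (-1) = -1.
  have := piD (-1) 1 (inB_val0 vN1) (inB_val0 val1).
  by rewrite addNr pi0 pi1 => /esym/eqP; rewrite addr_eq0 => /eqP.
have := panM (-1) x (unitB_val0 vN1) x_neq0.
by rewrite piN1 !mulN1r.
Qed.

Lemma pan_same_class x y g : x != 0 -> y != 0 -> val x = Some g -> val y = Some g ->
  pan x = pan y -> exists u, val u = Some 0 /\ y = u ^+ 2 * x.
Proof.
move=> x_neq0 y_neq0 vx vy pxy; case: hpan => _ [[_ _ _ _ pan_class] _].
have sq_gg : sqclass_eq g g by exists 0; rewrite subrr addr0.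
have [u [u_neq0 yE]] := pan_class x y g g x_neq0 y_neq0 vx vy sq_gg pxy.
exists u; split => //; have [b vu] := val_neq0 u_neq0.
move: vy; rewrite yE valM expr2 valM vu vx /= => -[bbg].
by congr Some; apply: double_eq0; apply: (@addIr _ g); rewrite add0r.
Qed.

Lemma pan_add_same x y a : x != 0 -> y != 0 -> val x = Some a -> val y = Some a ->
  pan x + pan y != 0 ->
  [/\ x + y != 0, val (x + y) = Some a & pan (x + y) = pan x + pan y].
Proof.
move=> x_neq0 y_neq0 vx vy psum_neq0.
have xy_neq0 : x + y != 0.
  apply: contraNneq psum_neq0 => /eqP; rewrite addr_eq0 => /eqP ->.
  by rewrite panN // addNr.
case: hpan => _ [[_ _ _ pan_add _] _].
by have [_ /(_ (etrans vx (esym vy)) psum_neq0) [-> ->]] :=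
  pan_add x y x_neq0 y_neq0 xy_neq0.
Qed.

Lemma pan_add_dominant x y a b : x != 0 -> y != 0 -> val x = Some a -> val y = Some b ->
  le a b -> a <> b -> [/\ x + y != 0, val (x + y) = Some a & pan (x + y) = pan x].
Proof.
move=> x_neq0 y_neq0 vx vy le_ab neq_ab.
have vxy := val_add_dominant vx vy le_ab neq_ab.
have xy_neq0 := neq0_of_val vxy.
case: hpan => _ [[_ _ _ pan_add _] _]; split => //.
have [-> //] := pan_add x y x_neq0 y_neq0 xy_neq0.
by rewrite vx vy; split => // -[].
Qed.

Section QuasiQuadraticModules.

Variable A : K -> Prop.
Hypothesis hA : is_overring le val A.

Lemma overring_B x : inB le val x -> A x. Proof. by case: hA => _ [_ _ _ _]; apply. Qed.

Lemma qq_in_A P x : quasi_quadratic A P -> P x -> A x. Proof. by case=> H _ _ _; apply: H. Qed.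
Lemma qq_add P x y : quasi_quadratic A P -> P x -> P y -> P (x + y).
Proof. by case=> _ _ H _; apply: H. Qed.

Lemma qq0 P : quasi_quadratic A P -> P 0.
Proof. by case=> _ [x Px] _ sq; have := sq 0 x (proj1 hA) Px; rewrite expr2 !mul0r. Qed.

Lemma qq_unit_sqM P t x : quasi_quadratic A P -> val t = Some 0 -> P x -> P (t ^+ 2 * x).
Proof. by case=> _ _ _ sq vt; apply: sq; apply: overring_B; apply: inB_val0. Qed.

Lemma qq_setSum P Q : quasi_quadratic A P -> quasi_quadratic A Q ->
  quasi_quadratic A (setSum_p P Q).
Proof.
move=> hP hQ; split.
- move=> z [x [y [Px Qy ->]]]; case: hA => _ [_ A_add _ _ _].
  by apply: A_add; [exact: qq_in_A hP Px | exact: qq_in_A hQ Qy].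
- by exists 0, 0, 0; split; [exact: qq0 | exact: qq0 | rewrite addr0].
- move=> z1 z2 [x1 [y1 [P1 Q1 ->]]] [x2 [y2 [P2 Q2 ->]]].
  exists (x1 + x2), (y1 + y2); split; [exact: qq_add | exact: qq_add | exact: addrACA].
- move=> a z Aa [x [y [Px Qy ->]]]; exists (a ^+ 2 * x), (a ^+ 2 * y).
  by case: hP => _ _ _ sqP; case: hQ => _ _ _ sqQ; split; rewrite ?mulrDr; auto.
Qed.

Lemma setSum_l P Q x : quasi_quadratic A Q -> P x -> setSum_p P Q x.
Proof. by move=> hQ Px; exists x, 0; split; rewrite ?addr0 //; apply: qq0. Qed.
Lemma setSum_r P Q y : quasi_quadratic A P -> Q y -> setSum_p P Q y.
Proof. by move=> hP Qy; exists 0, y; split; rewrite ?add0r //; apply: qq0. Qed.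

Lemma Mg_sqM P g d k : quasi_quadratic A P -> Mg val pan P g d -> Mg val pan P g (k ^+ 2 * d).
Proof.
move=> hP [[x [Px x_neq0 vx <-]]|->]; last by right; rewrite mulr0.
have [->|k_neq0] := eqVneq k 0; first by right; rewrite expr0n mul0r.
have [t [vt <-]] := residue_lift k_neq0.
left; exists (t ^+ 2 * x); split; first exact: qq_unit_sqM.
- by apply: (@neq0_of_val _ g); rewrite val_unit_sqM.
- by rewrite val_unit_sqM.
- by rewrite pan_unit_sqM.
Qed.

Lemma Mg_setSum_ge P Q g c : quasi_quadratic A P -> quasi_quadratic A Q ->
  setSum_p (Mg val pan P g) (Mg val pan Q g) c -> Mg val pan (setSum_p P Q) g c.
Proof.
move=> hP hQ [m [n [Pm Qn ->]]].
case: Pm => [[x [Px x_neq0 vx <-]]|->]; case: Qn => [[y [Qy y_neq0 vy <-]]|->].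
- have [->|psum_neq0] := eqVneq (pan x + pan y) 0; first by right.
  have [xy_neq0 vxy pxy] := pan_add_same x_neq0 y_neq0 vx vy psum_neq0.
  by left; exists (x + y); split => //; exists x, y.
- by left; exists x; rewrite addr0; split => //; apply: setSum_l.
- by left; exists y; rewrite add0r; split => //; apply: setSum_r.
- by right; rewrite addr0.
Qed.

Lemma Mg_setI P Q g : quasi_quadratic A Q ->
  seteq_p (Mg val pan (setI_p P Q) g) (setI_p (Mg val pan P g) (Mg val pan Q g)).
Proof.
move=> hQ c; split.
- by case=> [[x [[Px Qx] x_neq0 vx px]]|->]; split; try (by right); left; exists x.
- case=> [[[x [Px x_neq0 vx px]]|c0] [[y [Qy y_neq0 vy py]]|c0']]; try by right.
  have [u [vu xE]] := pan_same_class y_neq0 x_neq0 vy vx (etrans py (esym px)).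
  by left; exists x; split => //; split => //; rewrite xE; apply: qq_unit_sqM.
Qed.

Definition residue_full (P Q : K -> Prop) (h : G) : Prop :=
  setfull_p (setSum_p (Mg val pan P h) (Mg val pan Q h)).

(* Opposite components x in P, y in Q of the same value a make M_a(P) + M_a(Q)
   full: e = ((e/d + 1)/2)^2 d - ((e/d - 1)/2)^2 d with d = pan x. *)
Lemma residue_full_of_cancel P Q x y a : (2%:R : F) != 0 ->
  quasi_quadratic A P -> quasi_quadratic A Q ->
  P x -> Q y -> x != 0 -> y != 0 -> val x = Some a -> val y = Some a ->
  pan x + pan y = 0 -> residue_full P Q a.
Proof.
move=> two_neq0 hP hQ Px Qy x_neq0 y_neq0 vx vy cancel e.
have py : pan y = - pan x by apply/eqP; rewrite -addr_eq0 addrC cancel.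
have d_neq0 := pan_neq0 x_neq0.
pose p := (e / pan x + 1) / 2%:R; pose q := (e / pan x - 1) / 2%:R.
exists (p ^+ 2 * pan x), (q ^+ 2 * pan y); split.
- by apply: Mg_sqM => //; left; exists x.
- by apply: Mg_sqM => //; left; exists y.
- by rewrite py /p /q; field; rewrite d_neq0 two_neq0.
Qed.

Lemma residue_full_value P Q h z : quasi_quadratic A P -> quasi_quadratic A Q ->
  residue_full P Q h -> z != 0 -> val z = Some h -> setSum_p P Q z.
Proof.
move=> hP hQ full z_neq0 vz.
case: (Mg_setSum_ge hP hQ (full (pan z))) => [[w [Sw w_neq0 vw pw]]|pz0].
- have [u [vu ->]] := pan_same_class w_neq0 z_neq0 vw vz pw.
  exact: qq_unit_sqM (qq_setSum hP hQ) vu Sw.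
- by move: (pan_neq0 z_neq0); rewrite pz0 eqxx.
Qed.

(* Part (2): if M_h(P) + M_h(Q) = F for some h <= g, then M_g(P + Q) = F,
   since every element of value g > h is the sum of two elements of value h. *)
Lemma residue_full_above P Q g h : quasi_quadratic A P -> quasi_quadratic A Q ->
  le h g -> residue_full P Q h -> setfull_p (Mg val pan (setSum_p P Q) g).
Proof.
move=> hP hQ le_hg full c; have [->|c_neq0] := eqVneq c 0; first by right.
case: hpan => _ [[_ _ pan_onto _ _] _]; have [w [vw pw]] := pan_onto g c c_neq0.
have w_neq0 := neq0_of_val vw; left; exists w; split => //.
have [eq_hg|neq_hg] := eqVneq h g.
  by subst h; exact: residue_full_value full w_neq0 vw.
have [z vz] := val_surj h.
have vwz : val (- z + w) = Some h.
  by apply: (val_add_dominant _ vw le_hg); [rewrite valN | apply/eqP].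
rewrite -[w](addNKr z); apply: qq_add (qq_setSum hP hQ) _ _.
- exact: residue_full_value full (neq0_of_val vz) vz.
- exact: residue_full_value full (neq0_of_val vwz) vwz.
Qed.

(* A nonzero element of A of negative value is a unit of A, so its value lies
   in H u G_{>=0}. *)
Lemma value_in_H_or_nonneg x a : A x -> val x = Some a -> inH val A a \/ le 0 a.
Proof.
move=> Ax vx; have [le0a|lea0] := le_total 0 a; [by right | left].
exists x; split => //; first exact: neq0_of_val vx.
apply: overring_B; rewrite /inB (valV vx) /=.
by have := le_addr (- a) lea0; rewrite subrr add0r.
Qed.

Lemma sum_component_cases P Q x y g : quasi_quadratic A P -> quasi_quadratic A Q ->
  P x -> Q y -> x + y != 0 -> val (x + y) = Some g ->
  setSum_p (Mg val pan P g) (Mg val pan Q g) (pan (x + y)) \/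
  exists a, [/\ x != 0, y != 0, val x = Some a, val y = Some a & pan x + pan y = 0].
Proof.
move=> hP hQ Px Qy xy_neq0 vxy.
have [x0|x_neq0] := eqVneq x 0.
  left; exists 0, (pan y); move: xy_neq0 vxy; rewrite x0 !add0r.
  by split; [right | left; exists y |].
have [y0|y_neq0] := eqVneq y 0.
  left; exists (pan x), 0; move: xy_neq0 vxy; rewrite y0 !addr0.
  by split; [left; exists x | right |].
have [a vx] := val_neq0 x_neq0; have [b vy] := val_neq0 y_neq0.
have [eq_ab|/eqP neq_ab] := eqVneq a b.
  subst b; have [cancel|psum_neq0] := eqVneq (pan x + pan y) 0; first by right; exists a.
  have [_ vsum ->] := pan_add_same x_neq0 y_neq0 vx vy psum_neq0.
  move: vsum; rewrite vxy => -[->].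
  by left; exists (pan x), (pan y); split => //; left; [exists x | exists y].
have [le_ab|le_ba] := le_total a b.
- have [_ vsum ->] := pan_add_dominant x_neq0 y_neq0 vx vy le_ab neq_ab.
  move: vsum; rewrite vxy => -[->].
  by left; exists (pan x), 0; split; rewrite ?addr0 //; [left; exists x | right].
- have [_ vsum psum] := pan_add_dominant y_neq0 x_neq0 vy vx le_ba (not_eq_sym neq_ab).
  move: vsum psum; rewrite addrC vxy => -[->] ->.
  by left; exists 0, (pan y); split; rewrite ?add0r //; [right | left; exists y].
Qed.

Lemma Mg_setSum_no_full P Q g : (2%:R : F) != 0 ->
  quasi_quadratic A P -> quasi_quadratic A Q ->
  ~ (exists h, [/\ inH val A h \/ le 0 h, le h g & residue_full P Q h]) ->
  seteq_p (Mg val pan (setSum_p P Q) g) (setSum_p (Mg val pan P g) (Mg val pan Q g)).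
Proof.
move=> two_neq0 hP hQ no_full c; split; last exact: Mg_setSum_ge.
case=> [[z [[x [y [Px Qy ->]]] xy_neq0 vxy <-]]|->]; last first.
  by exists 0, 0; split; rewrite ?addr0 //; right.
have [//|[a [x_neq0 y_neq0 vx vy cancel]]] := sum_component_cases hP hQ Px Qy xy_neq0 vxy.
case: no_full; exists a; split.
- exact: value_in_H_or_nonneg (qq_in_A hP Px) vx.
- by have := @val_addr_ge x y a; rewrite vx vy vxy; apply; apply: le_refl.
- exact: residue_full_of_cancel two_neq0 hP hQ Px Qy x_neq0 y_neq0 vx vy cancel.
Qed.

End QuasiQuadraticModules.

End ResidueAndAngularComponent.
End Valuation.
End ValueGroupTheory.

(* Theorem 11.  The 2-henselianity of K enters only through the axioms of the
   pseudo-angular component map, and the identities hold for every g in G. *)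
Theorem mainTheorem11
  (G : zmodType) (le : G -> G -> Prop)
  (K : fieldType) (val : K -> option G)
  (F : fieldType) (pi : K -> F) (pan : K -> F)
  (A : K -> Prop) (M N : K -> Prop)
  (hG : is_ordered_group le)
  (hval : is_valuation le val)
  (hpi : is_residue_map le val pi)
  (hchar : (2%:R : F) != 0)
  (hhens : two_henselian le val pi)
  (hpan : is_pseudo_angular le val pi pan)
  (hA : is_overring le val A)
  (hM : quasi_quadratic A M) (hN : quasi_quadratic A N)
  (g : G) (hg : inH val A g \/ le 0 g) :
  seteq_p (Mg val pan (setI_p M N) g) (setI_p (Mg val pan M g) (Mg val pan N g)) /\
  ((exists h, [/\ inH val A h \/ le 0 h, le h g &
                  setfull_p (setSum_p (Mg val pan M h) (Mg val pan N h))]) ->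
     setfull_p (Mg val pan (setSum_p M N) g)) /\
  (~ (exists h, [/\ inH val A h \/ le 0 h, le h g &
                  setfull_p (setSum_p (Mg val pan M h) (Mg val pan N h))]) ->
     seteq_p (Mg val pan (setSum_p M N) g) (setSum_p (Mg val pan M g) (Mg val pan N g))).
Proof.
split; first exact (Mg_setI hG hval hpan hA M g hN).
split.
- by case=> h [_ le_hg full]; exact (residue_full_above hG hval hpi hpan hA hM hN le_hg full).
- exact (Mg_setSum_no_full hG hval hpi hpan hA hchar hM hN).
Qed.
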